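(* Let $G=(V,E)$ be a directed graph, $s\neq t$ vertices, $k\ge 1$ an integer and $e(u,v)\in E$. If $e(u,v)$ is an edge of $SPG_k(s,t)$, then there exist integers $k_f,k_b\ge 0$ such that $EV^*_{k_f}(s,u)$ and $EV^*_{k_b}(v,t)$ both exist, (1) $k_f+1+k_b\le k$, and (2) $EV^*_{k_f}(s,u)\cap EV^*_{k_b}(v,t)=\emptyset$. The converse does not hold in general: there exist $G,s,t,k$ and an edge $e(u,v)$ admitting such $k_f,k_b$ with $e(u,v)\notin SPG_k(s,t)$.
   Context: A path from $x$ to $y$ in $G$ is a vertex sequence $x=v_0,\dots,v_l=y$ with $(v_{i-1},v_i)\in E$; its length is $l$ and $V(p)$, $E(p)$ are its vertex and edge sets. A simple path has no repeated vertex. $SPG_k(s,t)$ is the subgraph of $G$ formed by the union of vertex sets and edge sets of all simple paths from $s$ to $t$ of length at most $k$. For a vertex $u$ and integer $l\ge 0$, $EV^*_l(s,u)$ exists iff there is at least one simple path from $s$ to $u$ of length at most $l$ not containing $t$, and then $EV^*_l(s,u)$ is the intersection of $V(p)$ over all such paths. Symmetrically, $EV^*_l(v,t)$ exists iff there is at least one simple path from $v$ to $t$ of length at most $l$ not containing $s$, and then it is the intersection of $V(p)$ over all such paths. *)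

(* A directed graph G = (V,E) is a finite type V with an edge
   relation E : rel V (self-loops allowed, irrelevant for simple paths). *)
From mathcomp Require Import all_boot.
Set Implicit Arguments. Unset Strict Implicit. Unset Printing Implicit Defensive.

Section Paths.
Variables (V : finType) (E : rel V).

(* A path from x to y is the vertex sequence x :: p with consecutive pairs in E
   and last vertex y; its length is size p; V(path) = x :: p. *)
Definition gpath (x y : V) (p : seq V) : bool := path E x p && (last x p == y).

Definition simple_path (x y : V) (p : seq V) : bool := gpath x y p && uniq (x :: p).

Definition path_edges (x : V) (p : seq V) : seq (V * V) := zip (x :: p) p.

Definition SPG_edge (k : nat) (s t u v : V) : Prop :=
  exists p, [/\ simple_path s t p, size p <= k & (u, v) \in path_edges s p].

Definition avoid_spath (z : V) (l : nat) (a b : V) (p : seq V) : Prop :=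
  [/\ simple_path a b p, size p <= l & z \notin a :: p].

Definition EV_exists (z : V) (l : nat) (a b : V) : Prop :=
  exists p, avoid_spath z l a b p.

Definition EV (z : V) (l : nat) (a b : V) : V -> Prop :=
  fun x => forall p, avoid_spath z l a b p -> x \in a :: p.

End Paths.

(* EV*_l(s,u): paths from s to u avoiding t;  EV*_l(v,t): paths from v to t avoiding s *)
Definition EVf (V : finType) (E : rel V) (s t : V) (l : nat) (u : V) := EV E t l s u.
Definition EVf_exists (V : finType) (E : rel V) (s t : V) (l : nat) (u : V) :=
  EV_exists E t l s u.
Definition EVb (V : finType) (E : rel V) (s t : V) (l : nat) (v : V) := EV E s l v t.
Definition EVb_exists (V : finType) (E : rel V) (s t : V) (l : nat) (v : V) :=
  EV_exists E s l v t.

Definition edge_condition (V : finType) (E : rel V) (k : nat) (s t u v : V) : Prop :=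
  exists kf kb : nat,
    [/\ EVf_exists E s t kf u, EVb_exists E s t kb v, kf + 1 + kb <= k
      & forall x, ~ (EVf E s t kf u x /\ EVb E s t kb v x)].

From mathcomp Require Import all_boot.

(* Cutting a simple s-t path through the edge (u,v) yields a simple s-u path
   avoiding t and a simple v-t path avoiding s whose vertex sets are disjoint;
   their lengths are admissible k_f, k_b, and each EV* set lies inside the
   vertex set of the corresponding piece.  The converse fails because EV* only
   records vertices common to ALL short paths: in the graph below, 3 is reached
   from 0 either through 1 or through 2, so EV*_2(0,3) = {0,3}, while the only
   continuation 4 -> 1 -> 2 -> 5 after the edge (3,4) revisits 1 or 2. *)

Set Implicit Arguments.
Unset Strict Implicit.
Unset Printing Implicit Defensive.

Lemma path_edges_split (T : finType) (x u v : T) (p : seq T) :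
  (u, v) \in path_edges x p -> exists a b, p = a ++ v :: b /\ last x a = u.
Proof.
elim: p x => [|y p IHp] x //=; rewrite in_cons => /orP[/eqP[-> ->]|uv_p].
  by exists [::], p.
have [a [b [-> <-]]] := IHp y uv_p.
by exists (y :: a), b.
Qed.

Fixpoint seqs_upto (T : Type) (l : seq T) (n : nat) : seq (seq T) :=
  if n is n'.+1 then [::] :: [seq x :: p | x <- l, p <- seqs_upto l n']
  else [:: [::]].

Lemma mem_seqs_upto (T : eqType) (l p : seq T) (n : nat) :
  {subset p <= l} -> size p <= n -> p \in seqs_upto l n.
Proof.
elim: n p => [|n IHn] [|x p] //= sub_pl size_p; rewrite in_cons /=.
apply/allpairsP; exists (x, p) => /=; split=> //; first exact/sub_pl/mem_head.
by apply: IHn => // y y_p; apply/sub_pl; rewrite in_cons y_p orbT.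
Qed.

Section SimplePaths.

Variables (V : finType) (E : rel V).

Lemma simple_path_cat (s t v : V) (a b : seq V) :
  simple_path E s t (a ++ v :: b) ->
  [/\ simple_path E s (last s a) a, simple_path E v t b
    & [disjoint s :: a & v :: b]].
Proof.
rewrite /simple_path /gpath cat_path last_cat [path _ _ (v :: b)]/= -cat_cons cat_uniq.
case/andP=> /andP[/andP[-> /andP[_ ->]] ->] /and3P[-> dis ->].
by rewrite eqxx disjoint_sym disjoint_has.
Qed.

Lemma SPG_edge_condition (k : nat) (s t u v : V) :
  SPG_edge E k s t u v -> edge_condition E k s t u v.
Proof.
case=> p [sp_p size_p uv_p].
have [a [b [def_p last_a]]] := path_edges_split uv_p.
rewrite {}def_p in sp_p size_p.
have [sp_a sp_b dis] := simple_path_cat sp_p.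
rewrite last_a in sp_a.
have t_b : t \in v :: b by case/andP: sp_b => /andP[_ /eqP <-] _; apply: mem_last.
have av_a : avoid_spath E t (size a) s u a.
  by split=> //; apply/negP => t_a; rewrite (disjointFr dis t_a) in t_b.
have av_b : avoid_spath E s (size b) v t b.
  by split=> //; rewrite (disjointFr dis (mem_head s a)).
exists (size a), (size b); split; [by exists a | by exists b | |].
  by move: size_p; rewrite size_cat /= addn1 addSn -addnS.
move=> x [/(_ a av_a) x_a /(_ b av_b)].
by rewrite (disjointFr dis x_a).
Qed.

Lemma SPG_edgeP (l : seq V) (l_full : forall x, x \in l) (k : nat) (s t u v : V) :
  reflect (SPG_edge E k s t u v)
    (has (fun p => [&& simple_path E s t p, size p <= k & (u, v) \in path_edges s p])
         (seqs_upto l k)).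
Proof.
apply: (iffP hasP) => [[p _ /and3P[sp_p size_p uv_p]] | [p [sp_p size_p uv_p]]].
  by exists p.
exists p; last by rewrite sp_p size_p uv_p.
exact: mem_seqs_upto.
Qed.

End SimplePaths.

(* Unlike [inord n], this reduces by computation ([insub] is stuck on the opaque [idP]). *)
Local Notation vx n := (@Ordinal 6 n isT).

Definition cex_graph : rel 'I_6 := fun x y =>
  (val x, val y) \in
    [:: (0, 1); (0, 2); (1, 2); (1, 3); (2, 3); (2, 5); (3, 4); (4, 1)]%N.

Definition cex_vertices : seq 'I_6 := [:: vx 0; vx 1; vx 2; vx 3; vx 4; vx 5].

Lemma mem_cex_vertices (x : 'I_6) : x \in cex_vertices.
Proof. by case: x => [[|[|[|[|[|[|m]]]]]] lt_m6]. Qed.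

Lemma cex_edge_condition : edge_condition cex_graph 6 (vx 0) (vx 5) (vx 3) (vx 4).
Proof.
have av_13 : avoid_spath cex_graph (vx 5) 2 (vx 0) (vx 3) [:: vx 1; vx 3] by [].
have av_23 : avoid_spath cex_graph (vx 5) 2 (vx 0) (vx 3) [:: vx 2; vx 3] by [].
have av_125 : avoid_spath cex_graph (vx 0) 3 (vx 4) (vx 5) [:: vx 1; vx 2; vx 5] by [].
exists 2, 3; split; [by exists [:: vx 1; vx 3] | by exists [:: vx 1; vx 2; vx 5] | by [] |].
move=> x [EVf_x EVb_x].
have : all (fun y => ~~ [&& y \in [:: vx 0; vx 1; vx 3], y \in [:: vx 0; vx 2; vx 3]
                          & y \in [:: vx 4; vx 1; vx 2; vx 5]]) cex_vertices.
  by vm_compute.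
move/allP/(_ x (mem_cex_vertices x)).
by rewrite (EVf_x _ av_13) (EVf_x _ av_23) (EVb_x _ av_125).
Qed.

Lemma cex_not_SPG_edge : ~ SPG_edge cex_graph 6 (vx 0) (vx 5) (vx 3) (vx 4).
Proof. by move/(SPG_edgeP _ mem_cex_vertices); vm_compute. Qed.

Theorem lemma3p3 :
  (forall (V : finType) (E : rel V) (s t : V) (k : nat) (u v : V),
      s != t -> 1 <= k -> E u v ->
      SPG_edge E k s t u v -> edge_condition E k s t u v)
  /\
  (exists (V : finType) (E : rel V) (s t : V) (k : nat) (u v : V),
      [/\ s != t, 1 <= k, E u v, edge_condition E k s t u v
        & ~ SPG_edge E k s t u v]).
Proof.
split=> [V E s t k u v _ _ _|]; first exact: SPG_edge_condition.
exists 'I_6, cex_graph, (vx 0), (vx 5), 6, (vx 3), (vx 4).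
split=> //; first exact: cex_edge_condition.
exact: cex_not_SPG_edge.
Qed.
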